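(* If $\psi\in LFD$ is satisfiable (in some dependence model at some assignment) and $|V_\psi|=k$, then there is a dependence model $\mathbb{M}=(M,A)$ for the vocabulary $(V_\psi,\tau_\psi)$ such that $M$ is a $k$-tree of finite branching degree and $\mathbb{M},s\models\psi$ for some $s\in A$.
   Context: The language $LFD[V,\tau]$ is generated by $\varphi::=P\mathbf{x}\mid\neg\varphi\mid\varphi\wedge\varphi\mid\mathbb{D}_X\varphi\mid D_Xy$, with $X\subseteq V$ finite, $y\in V$, $P\in\tau$, $\mathbf{x}\in V^{ar(P)}$. $V_\psi$ is the set of variables occurring in $\psi$ and $\tau_\psi$ the set of predicates occurring in $\psi$. A dependence model is a pair $\mathbb{M}=(M,A)$ with $M$ a $\tau$-structure with domain $O$ and $A\subseteq O^V$. Semantics at $s\in A$: $s\models P\mathbf{x}$ iff $s(\mathbf{x})\in P^M$; Booleans as usual; $s\models\mathbb{D}_X\varphi$ iff $t\models\varphi$ for all $t\in A$ with $s\restriction X=t\restriction X$; $s\models D_Xy$ iff for all $t\in A$, $s\restriction X=t\restriction X$ implies $s(y)=t(y)$. A tuple $\mathbf{a}=(a_1,\dots,a_r)$ from $M$ is live if $M\models P\mathbf{a}$ for some $r$-ary $P\in\tau$. $M$ is a $k$-tree if there is a tree (acyclic connected graph) $T=(N,E)$ and a map $F$ assigning to each node a subset of the domain of $M$ of size at most $k$ such that (i) for every live tuple $\mathbf{a}$ there is a node $u$ with $\{a_1,\dots,a_r\}\subseteq F(u)$, and (ii) for every element $a$ the set $\{u\mid a\in F(u)\}$ is connected in $T$.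 $M$ has finite branching degree if $T$ can be chosen so that every node has finitely many neighbours. *)

From Stdlib Require Import List Relation_Operators.
From mathcomp Require Import all_boot.
Set Implicit Arguments.
Unset Strict Implicit.
Unset Printing Implicit Defensive.

Section LFD.
Variables (V : eqType) (Pred : eqType) (ar : Pred -> nat).

Inductive lfd : Type :=
  | Atom (P : Pred) (xs : (ar P).-tuple V)
  | Neg (f : lfd)
  | And (f g : lfd)
  | DBox (X : seq V) (f : lfd)
  | Dep (X : seq V) (y : V).

(** V_psi, as a sequence (possibly with repetitions). *)
Fixpoint vars (f : lfd) : seq V :=
  match f with
  | Atom _ xs => tval xs
  | Neg f => vars f
  | And f g => vars f ++ vars g
  | DBox X f => X ++ vars f
  | Dep X y => y :: X
  end.

Fixpoint preds (f : lfd) : seq Pred :=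
  match f with
  | Atom P _ => [:: P]
  | Neg f => preds f
  | And f g => preds f ++ preds g
  | DBox _ f => preds f
  | Dep _ _ => [::]
  end.

Definition interp (O : Type) := forall P : Pred, (ar P).-tuple O -> Prop.

Definition agree (O : Type) (X : seq V) (s t : V -> O) : Prop :=
  forall x, x \in X -> s x = t x.

Fixpoint sat (O : Type) (I : interp O) (A : (V -> O) -> Prop)
    (s : V -> O) (f : lfd) : Prop :=
  match f with
  | Atom P xs => I P [tuple of map s xs]
  | Neg f => ~ sat I A s f
  | And f g => sat I A s f /\ sat I A s g
  | DBox X f => forall t, A t -> agree X s t -> sat I A t f
  | Dep X y => forall t, A t -> agree X s t -> s y = t y
  end.

Definition satisfiable (f : lfd) : Prop :=
  exists (O : Type) (I : interp O) (A : (V -> O) -> Prop) (s : V -> O),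
    A s /\ sat I A s f.

End LFD.

Section Trees.
Variable N : Type.
Variable E : N -> N -> Prop.

Fixpoint epath (u : N) (l : list N) : Prop :=
  match l with
  | nil => True
  | v :: l' => E u v /\ epath v l'
  end.

Definition has_cycle : Prop :=
  exists (u : N) (l : list N),
    2 <= length l /\ NoDup (u :: l) /\ epath u l /\ E (List.last l u) u.

Definition is_tree : Prop :=
  inhabited N /\
  (forall u v, E u v -> E v u) /\
  (forall u, ~ E u u) /\
  (forall u v, clos_refl_trans N E u v) /\
  ~ has_cycle.

Definition finitely_branching : Prop :=
  forall u, exists l : list N, forall v, E u v -> In v l.

Definition connected_set (S : N -> Prop) : Prop :=
  forall u v, S u -> S v ->
    clos_refl_trans N (fun x y => E x y /\ S x /\ S y) u v.
End Trees.

Section KTree.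
Variables (Pred : eqType) (ar : Pred -> nat).

Definition size_le (O : Type) (B : O -> Prop) (k : nat) : Prop :=
  exists l : list O, (length l <= k)%nat /\ forall a, B a -> In a l.

Definition live (O : Type) (tau : seq Pred) (I : interp ar O)
    (r : nat) (a : r.-tuple O) : Prop :=
  exists P : Pred, exists e : ar P = r,
    P \in tau /\ I P (ecast n (n.-tuple O) (esym e) a).

Definition ktree_fb (O : Type) (tau : seq Pred) (I : interp ar O) (k : nat)
  : Prop :=
  exists (N : Type) (E : N -> N -> Prop) (F : N -> O -> Prop),
    is_tree E /\ finitely_branching E /\
    (forall u, size_le (F u) k) /\
    (forall r (a : r.-tuple O), live tau I a ->
       exists u, forall x, In x (tval a) -> F u x) /\
    (forall x : O, connected_set E (fun u => F u x)).
End KTree.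

From Stdlib Require Import List Relation_Operators ClassicalEpsilon Classical.
From mathcomp Require Import all_boot zify.
Set Implicit Arguments.
Unset Strict Implicit.
Unset Printing Implicit Defensive.

(** The proof unravels a given model ((O, I), A, s0) of psi along the
    quantifiers of psi.  Nodes of the unravelling are words over an alphabet
    indexing the subformulas of psi; the root carries s0, and the child c :: u
    of a node u carries an assignment of A that refutes the c-th subformula at
    the assignment of u, whenever such a counterexample exists.  A variable x at
    node u is then named by its "origin": the deepest ancestor of u at which the
    value of x last changed.  The new domain consists of these names, the new
    team of the renamed assignments, and a tuple is in a predicate when it comes
    from a true atom at some node. *)

Lemma InP (T : eqType) (x : T) (s : seq T) : reflect (In x s) (x \in s).
Proof.
elim: s => [|y s IH]; first by right.
rewrite inE; apply: (iffP orP) => [[/eqP ->|/IH]|[->|/IH]]; by [left|right].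
Qed.

Lemma NoDup_uniq (T : eqType) (s : seq T) : NoDup s -> uniq s.
Proof. by elim=> //= x s' x_notin _ ->; rewrite andbT; apply/negP => /InP /x_notin. Qed.

Lemma List_last_last (T : Type) (u : T) (l : seq T) : List.last l u = last u l.
Proof. by elim: l u => //= v [|w l] IH u //; apply: IH. Qed.

Lemma clos_rt_sym (T : Type) (R : T -> T -> Prop) :
  (forall a b, R a b -> R b a) ->
  forall a b, clos_refl_trans T R a b -> clos_refl_trans T R b a.
Proof.
move=> R_sym a b; elim=> [x y /R_sym|x|x y z _ Hxy _ Hyz].
- exact: rt_step.
- exact: rt_refl.
- exact: rt_trans Hyz Hxy.
Qed.

Lemma ordS_twice_neq m (i : 'I_m) : 2 < m -> ordS (ordS i) != i.
Proof.
move=> m_gt2; apply/eqP => /(congr1 val) /=; move: (nat_of_ord i) (ltn_ord i) => j lt_j.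
have [lt_j1|eq_j1] : j.+1 < m \/ j.+1 = m by lia.
- rewrite (modn_small lt_j1).
  have [lt_j2|eq_j2] : j.+2 < m \/ j.+2 = m by lia.
  + rewrite modn_small //; lia.
  + rewrite -eq_j2 modnn; lia.
- rewrite -eq_j1 modnn modn_small; lia.
Qed.

(** A graph in which every edge links a node to its parent, the parent being
    strictly lower, has no cycle: on a cycle, both neighbours of a highest node
    would be its parent. *)
Section ParentGraphs.
Variables (T : eqType) (E : T -> T -> Prop) (parent : T -> T) (height : T -> nat).
Hypothesis edge_parent : forall u v, E u v ->
  (u = parent v /\ height u < height v) \/ (v = parent u /\ height v < height u).

Lemma epath_nth u l : epath E u l ->
  forall d i, i < size l -> E (nth d (u :: l) i) (nth d (u :: l) i.+1).
Proof. by elim: l u => //= v l IH u [_ path_l] d [|i] //= lt_i; apply: IH. Qed.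

Lemma parent_graph_acyclic : ~ has_cycle E.
Proof.
move=> [u [l [size_l [nodup [path_l last_edge]]]]].
have uniq_ul : uniq (u :: l) by apply: NoDup_uniq.
pose x (i : 'I_(size l).+1) := nth u (u :: l) i.
have cycle_edge i : E (x i) (x (ordS i)).
  rewrite /x /=; case: (ltnP i (size l)) => le_i.
  - by rewrite modn_small ?ltnS //; apply: epath_nth.
  - have -> : nat_of_ord i = size l by have := ltn_ord i; lia.
    by rewrite modnn -[size l]/((size (u :: l)).-1) nth_last /= -List_last_last.
pose i0 := [arg max_(i > ord0) height (x i)].
have max_i0 i : height (x i) <= height (x i0) by rewrite /i0; case: arg_maxnP => // j _; apply.
have to_parent j : E (x j) (x i0) \/ E (x i0) (x j) -> x j = parent (x i0).
  move: (max_i0 j) => le_j.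
  by case=> /edge_parent [[? ?]|[? ?]] //; lia.
have pred_parent : x (ord_pred i0) = parent (x i0).
  by apply: to_parent; left; rewrite -{2}(ord_predK i0); apply: cycle_edge.
have succ_parent : x (ordS i0) = parent (x i0) by apply: to_parent; right; apply: cycle_edge.
have : ord_pred i0 = ordS i0.
  apply/val_inj/eqP; rewrite -(nth_uniq u (ltn_ord _) (ltn_ord _) uniq_ul).
  by apply/eqP; apply: etrans pred_parent (esym succ_parent).
move=> /(congr1 (@ordS _)); rewrite ord_predK => /esym /eqP; apply/negP.
by apply: ordS_twice_neq; rewrite ltnS.
Qed.
End ParentGraphs.

Section WordTree.
Variable X : Type.

Definition word_edge (u v : seq X) : Prop :=
  (exists c, v = c :: u) \/ (exists c, u = c :: v).

Lemma word_edge_sym u v : word_edge u v -> word_edge v u.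
Proof. by case=> H; [right|left]. Qed.

Lemma word_edge_parent u v : word_edge u v ->
  (u = behead v /\ size u < size v) \/ (v = behead u /\ size v < size u).
Proof. by case=> [[c ->]|[c ->]]; [left|right]. Qed.

Lemma word_edge_to_root u : clos_refl_trans _ word_edge u [::].
Proof.
elim: u => [|c u IH]; first exact: rt_refl.
by apply: rt_trans IH; apply: rt_step; right; exists c.
Qed.
End WordTree.

Lemma word_tree (X : eqType) : is_tree (@word_edge X).
Proof.
split; first exact: inhabits [::].
split; first exact: word_edge_sym.
split; first by move=> u /word_edge_parent; lia.
split; last exact: parent_graph_acyclic (@word_edge_parent X).
move=> u v; apply: rt_trans (word_edge_to_root u) _.
exact: clos_rt_sym (@word_edge_sym X) _ _ (word_edge_to_root v).
Qed.

Lemma word_tree_finitely_branching (X : finType) : finitely_branching (@word_edge X).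
Proof.
move=> u; exists (behead u :: [seq c :: u | c <- enum X]) => v.
case=> [[c ->]|[c ->]]; apply/InP; last by rewrite inE eqxx.
by rewrite inE map_f ?orbT ?mem_enum.
Qed.

(** The ancestors of a word u are its suffixes; they form a chain. *)
Section Suffixes.
Variable T : eqType.
Implicit Types q u w : seq T.

Lemma suffix_consE q c w : suffix q (c :: w) = (q == c :: w) || suffix q w.
Proof.
apply/idP/idP => [/suffixP [[|d r] /= e]|/orP [/eqP ->|/suffix_trans]].
- by rewrite e eqxx.
- by case: e => _ ->; rewrite suffix_suffix orbT.
- exact: suffix_refl.
- by apply; apply: suffix_cons.
Qed.

Lemma suffix_total a b u :
  suffix a u -> suffix b u -> size a <= size b -> suffix a b.
Proof.
move=> sau sbu le_ab; have le_au := size_suffix sau; have le_bu := size_suffix sbu.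
move: sau sbu; rewrite !suffixE => /eqP ea /eqP eb; apply/eqP.
by rewrite -[b in drop _ b]eb -[in RHS]ea drop_drop; congr drop; lia.
Qed.

Lemma longest_suffix u (s : seq (seq T)) : s != [::] ->
  all (fun q => suffix q u) s -> exists2 q, q \in s & all (fun z => suffix z q) s.
Proof.
elim: s => // a [|b s] IH _ all_as.
  by exists a; rewrite /= ?inE ?suffix_refl.
have /andP [sau all_u] : suffix a u && all (fun z => suffix z u) (b :: s) := all_as.
have [q q_in all_q] := IH isT all_u.
have squ : suffix q u by apply: (allP all_u).
case: (leqP (size a) (size q)) => [le_aq|lt_qa].
- exists q; first by rewrite inE q_in orbT.
  by apply/andP; split; first exact: suffix_total sau squ le_aq.
- have sqa : suffix q a by apply: suffix_total squ sau (ltnW lt_qa).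
  exists a; first exact: mem_head.
  apply/allP => z; rewrite in_cons => /orP [/eqP ->|/(allP all_q) szq].
  + exact: suffix_refl.
  + exact: suffix_trans szq sqa.
Qed.
End Suffixes.

Section Subformulas.
Variables (V Pred : eqType) (ar : Pred -> nat).
Local Notation formula := (@lfd V Pred ar).

Fixpoint subformulas (f : formula) : seq formula :=
  f :: match f with
       | Neg g => subformulas g
       | And g h => subformulas g ++ subformulas h
       | DBox _ g => subformulas g
       | _ => [::]
       end.

Lemma subformulas_refl f : In f (subformulas f).
Proof. by case: f => /=; left. Qed.

Lemma subformula_rel (R : formula -> formula -> Prop) :
  (forall f, R f f) -> (forall f g h, R f g -> R g h -> R f h) ->
  (forall g, R g (Neg g)) -> (forall g h, R g (And g h)) ->
  (forall g h, R h (And g h)) -> (forall X g, R g (DBox X g)) ->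
  forall f h, In f (subformulas h) -> R f h.
Proof.
move=> R_refl R_trans R_neg R_andl R_andr R_box f.
elim=> [P xs|g IH|g IHg h IHh|X g IH|X y] /= [<-|in_f] //.
- exact: R_trans (IH in_f) (R_neg g).
- by case: (in_app_or _ _ _ in_f) => [/IHg|/IHh] R_f; apply: R_trans R_f _.
- exact: R_trans (IH in_f) (R_box X g).
Qed.

Lemma subformulas_trans g f h :
  In g (subformulas f) -> In f (subformulas h) -> In g (subformulas h).
Proof.
move=> in_g in_f; move: g in_g.
apply: (subformula_rel (R := fun f h =>
  forall g, In g (subformulas f) -> In g (subformulas h))) in_f => /=.
- by [].
- by move=> f1 f2 f3 H12 H23 g1 /H12 /H23.
- by move=> g1 g2; right.
- by move=> g1 g2 g3 H; right; apply: in_or_app; left.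
- by move=> g1 g2 g3 H; right; apply: in_or_app; right.
- by move=> X g1 g2; right.
Qed.

Lemma subformula_vars f h : In f (subformulas h) -> {subset vars f <= vars h}.
Proof.
apply: (subformula_rel (R := fun f h => {subset vars f <= vars h})) => /=.
- by move=> f1 x.
- by move=> f1 f2 f3 H12 H23 x /H12 /H23.
- by move=> g1 x.
- by move=> g1 g2 x x_in; rewrite mem_cat x_in.
- by move=> g1 g2 x x_in; rewrite mem_cat x_in orbT.
- by move=> X g1 x x_in; rewrite mem_cat x_in orbT.
Qed.

Lemma subformula_preds f h : In f (subformulas h) -> {subset preds f <= preds h}.
Proof.
apply: (subformula_rel (R := fun f h => {subset preds f <= preds h})) => /=.
- by move=> f1 P.
- by move=> f1 f2 f3 H12 H23 P /H12 /H23.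
- by move=> g1 P.
- by move=> g1 g2 P P_in; rewrite mem_cat P_in.
- by move=> g1 g2 P P_in; rewrite mem_cat P_in orbT.
- by move=> X g1 P.
Qed.

Lemma subformula_index f h : In f (subformulas h) ->
  exists c : 'I_(size (subformulas h)), nth h (subformulas h) c = f.
Proof.
elim: (subformulas h) => //= g l IH [<-|/IH [c <-]].
- by exists ord0.
- by exists (lift ord0 c).
Qed.
End Subformulas.

Section Unravelling.
Variables (V Pred : eqType) (ar : Pred -> nat) (psi : @lfd V Pred ar).
Variables (O : Type) (I : interp ar O) (A : (V -> O) -> Prop) (s0 : V -> O).
Hypothesis A_s0 : A s0.
Local Notation formula := (@lfd V Pred ar).

Definition refutes (f : formula) (s t : V -> O) : Prop :=
  match f with
  | DBox X g => agree X s t /\ ~ sat I A t g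
  | Dep X y => agree X s t /\ s y <> t y
  | _ => False
  end.

Lemma box_counterexample X g s :
  ~ sat I A s (DBox X g) -> exists2 t, A t & refutes (DBox X g) s t.
Proof.
move=> not_sat; apply: NNPP => no_ce; apply: not_sat => t A_t agree_t.
by apply: NNPP => not_sat_t; apply: no_ce; exists t.
Qed.

Lemma dep_counterexample X y s :
  ~ sat I A s (Dep ar X y) -> exists2 t, A t & refutes (Dep ar X y) s t.
Proof.
move=> not_sat; apply: NNPP => no_ce; apply: not_sat => t A_t agree_t.
by apply: NNPP => neq_y; apply: no_ce; exists t.
Qed.

Definition good_witness (f : formula) (s t : V -> O) : Prop :=
  A t /\ ((exists2 t', A t' & refutes f s t') -> refutes f s t).

Definition witness (f : formula) (s : V -> O) : V -> O :=
  epsilon (inhabits s) (good_witness f s).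

Lemma witness_spec f s : A s -> good_witness f s (witness f s).
Proof.
move=> A_s; apply: epsilon_spec.
have [[t A_t ref_t]|no_ce] := classic (exists2 t, A t & refutes f s t).
- by exists t.
- by exists s; split => // ce; case: no_ce.
Qed.

Local Notation letter := 'I_(size (subformulas psi)).
Local Notation node := (seq letter).

Definition formula_of (c : letter) : formula := nth psi (subformulas psi) c.

Fixpoint asg (u : node) : V -> O :=
  if u is c :: u' then witness (formula_of c) (asg u') else s0.

Lemma A_asg u : A (asg u).
Proof. by elim: u => //= c u IH; case: (witness_spec (formula_of c) IH). Qed.

Lemma child_refutes f u : In f (subformulas psi) ->
  (exists2 t, A t & refutes f (asg u) t) -> exists c, refutes f (asg u) (asg (c :: u)).
Proof.
move=> /subformula_index [c <-] ce; exists c.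
exact: (witness_spec (formula_of c) (A_asg u)).2 ce.
Qed.

Fixpoint origin (u : node) (x : V) : node :=
  if u is c :: u' then
    if excluded_middle_informative (asg u x = asg u' x) then origin u' x else u
  else [::].

Lemma origin_same c u x : asg (c :: u) x = asg u x -> origin (c :: u) x = origin u x.
Proof. by move=> same; rewrite [LHS]/=; case: excluded_middle_informative. Qed.

Lemma origin_new c u x : asg (c :: u) x <> asg u x -> origin (c :: u) x = c :: u.
Proof. by move=> new; rewrite [LHS]/=; case: excluded_middle_informative. Qed.

Lemma origin_suffix u x : suffix (origin u x) u.
Proof.
elim: u => [|c u IH]; first exact: suffix_refl.
have [same|new] := classic (asg (c :: u) x = asg u x).
- by rewrite origin_same //; apply: suffix_trans IH (suffix_cons _ _).
- by rewrite origin_new //; apply: suffix_refl.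
Qed.

Lemma asg_origin u x : asg (origin u x) x = asg u x.
Proof.
elim: u => // c u IH; have [same|new] := classic (asg (c :: u) x = asg u x).
- by rewrite origin_same // IH same.
- by rewrite origin_new.
Qed.

Lemma origin_between u w x :
  suffix (origin u x) w -> suffix w u -> origin w x = origin u x.
Proof.
elim: u => [|c u IH] ow wu; first by move: wu; rewrite suffixs0 => /eqP ->.
move: wu; rewrite suffix_consE => /orP [/eqP -> //|wu].
have [same|new] := classic (asg (c :: u) x = asg u x).
- by rewrite origin_same // in ow *; apply: IH.
- rewrite origin_new // in ow.
  by have := size_suffix ow; have := size_suffix wu => /=; lia.
Qed.

Lemma asg_between u w x : suffix (origin u x) w -> suffix w u -> asg w x = asg u x.
Proof. by move=> ow wu; rewrite -asg_origin (origin_between ow wu) asg_origin. Qed.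

Lemma origin_stable q w y : suffix q w ->
  (forall z, suffix q z -> suffix z w -> asg z y = asg q y) -> origin w y = origin q y.
Proof.
elim: w => [|c w IH] qw const; first by move: qw; rewrite suffixs0 => /eqP ->.
move: (qw); rewrite suffix_consE => /orP [/eqP eq_q|qw'].
  by rewrite eq_q.
have wcw : suffix w (c :: w) := suffix_cons w c.
rewrite origin_same; last by rewrite const ?suffix_refl // const.
by apply: IH qw' _ => z qz zw; apply: const qz (suffix_trans zw wcw).
Qed.

Lemma origin_dep X y u q w :
  (forall t, A t -> agree X (asg u) t -> asg u y = t y) ->
  (forall x, x \in X -> suffix (origin u x) q) -> suffix q w ->
  (forall x, x \in X -> origin w x = origin u x) -> origin w y = origin q y.
Proof.
move=> dep_u below_q qw same_origin.
have const z : suffix q z -> suffix z w -> asg z y = asg u y.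
  move=> qz zw; symmetry; apply: dep_u; first exact: A_asg.
  move=> x x_in; rewrite -asg_origin -(same_origin x x_in) asg_origin.
  symmetry; apply: asg_between zw.
  by rewrite same_origin //; apply: suffix_trans (below_q x x_in) qz.
have q_val : asg q y = asg u y := const q (suffix_refl q) qw.
by apply: origin_stable qw _ => z qz zw; rewrite q_val; apply: const.
Qed.

(** Hence if y depends on X at u, then any node g at which the variables of X
    have the same origins as at u gives y the same origin as u: both branches
    start from the longest of these origins. *)
Lemma dep_origin X y u g :
  (forall t, A t -> agree X (asg u) t -> asg u y = t y) ->
  (forall x, x \in X -> origin g x = origin u x) -> origin u y = origin g y.
Proof.
move=> dep_u same_origin.
have [|q q_in] := @longest_suffix _ u ([::] :: map (origin u) X) isT.
  by rewrite /= suffix0s; apply/allP => _ /mapP [x _ ->]; apply: origin_suffix.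
move=> /andP [_ /allP below_q].
have below x : x \in X -> suffix (origin u x) q by move=> x_in; apply/below_q/map_f.
have [qu qg] : suffix q u /\ suffix q g.
  move: q_in; rewrite in_cons => /orP [/eqP ->|/mapP [x x_in ->]].
    by rewrite !suffix0s.
  by rewrite -{2}same_origin // !origin_suffix.
by rewrite (origin_dep dep_u below qu) // (origin_dep dep_u below qg).
Qed.

(** The unravelled model: its elements name a variable of psi by its origin,
    the other variables being sent to [None]. *)
Definition point := option (node * V).

Definition new_asg (u : node) (x : V) : point :=
  if x \in vars psi then Some (origin u x, x) else None.

Definition new_interp : interp ar point := fun P a =>
  P \in preds psi /\ exists u (xs : (ar P).-tuple V),
    tval a = map (new_asg u) xs /\ {subset xs <= vars psi} /\
    I [tuple of map (asg u) xs].

Definition new_team (t : V -> point) : Prop := exists u, t = new_asg u.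

Lemma new_asgE u g x : x \in vars psi ->
  (new_asg u x = new_asg g x <-> origin u x = origin g x).
Proof. by move=> x_in; rewrite /new_asg x_in; split=> [[]|->]. Qed.

Lemma new_agree X u g : {subset X <= vars psi} ->
  agree X (new_asg u) (new_asg g) -> agree X (asg u) (asg g).
Proof.
move=> X_sub same x x_in.
have eq_origin : origin u x = origin g x by apply/new_asgE; [exact: X_sub|exact: same].
by rewrite -asg_origin eq_origin asg_origin.
Qed.

Lemma new_agree_child X u c : {subset X <= vars psi} ->
  agree X (asg u) (asg (c :: u)) -> agree X (new_asg u) (new_asg (c :: u)).
Proof.
move=> X_sub same x x_in; apply/new_asgE; first exact: X_sub.
by rewrite origin_same // same.
Qed.

Lemma new_map_asg u u' (xs xs' : seq V) :
  {subset xs <= vars psi} -> {subset xs' <= vars psi} ->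
  map (new_asg u) xs = map (new_asg u') xs' -> map (asg u) xs = map (asg u') xs'.
Proof.
elim: xs xs' => [|x xs IH] [|x' xs'] //= sub sub' [eq_x eq_xs].
have x_in : x \in vars psi by apply: sub; rewrite mem_head.
have x'_in : x' \in vars psi by apply: sub'; rewrite mem_head.
move: eq_x; rewrite /new_asg x_in x'_in => -[eq_origin eq_x]; subst x'.
rewrite -asg_origin eq_origin asg_origin; congr (_ :: _).
by apply: IH eq_xs => z z_in; [apply: sub|apply: sub']; rewrite inE z_in orbT.
Qed.

Definition faithful (f : formula) : Prop :=
  forall u, sat new_interp new_team (new_asg u) f <-> sat I A (asg u) f.

Lemma faithful_atom P (xs : (ar P).-tuple V) :
  In (Atom xs) (subformulas psi) -> faithful (Atom xs).
Proof.
move=> sub u; have xs_sub := subformula_vars sub.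
split=> [[_ [u' [xs' [eq_tuple [xs'_sub I_xs']]]]]|I_xs].
- rewrite /=; suff -> : [tuple of map (asg u) xs] = [tuple of map (asg u') xs'] by [].
  by apply: val_inj; apply: new_map_asg.
- split; first by apply: (subformula_preds sub); rewrite mem_head.
  by exists u, xs.
Qed.

(** A failure of a modality at a node is witnessed at a child, whose renaming
    is in the new team and agrees with the renaming of the node. *)
Lemma faithful_box X g : In (DBox X g) (subformulas psi) -> faithful g ->
  faithful (DBox X g).
Proof.
move=> sub faithful_g u.
have X_sub : {subset X <= vars psi}.
  by move=> x x_in; apply: (subformula_vars sub); rewrite mem_cat x_in.
split=> [new_box|old_box].
- apply: NNPP => /box_counterexample /(child_refutes sub) [c [agree_c not_sat_c]].
  apply/not_sat_c/faithful_g; apply: new_box; first by exists (c :: u).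
  exact: new_agree_child.
- move=> t [g' ->] agree_g'; apply/faithful_g.
  by apply: old_box; [exact: A_asg|exact: new_agree].
Qed.

(** A new dependence failure would appear at a child; an old dependence
    transfers by [dep_origin]. *)
Lemma faithful_dep X y : In (Dep ar X y) (subformulas psi) -> faithful (Dep ar X y).
Proof.
move=> sub u.
have X_sub : {subset X <= vars psi}.
  by move=> x x_in; apply: (subformula_vars sub); rewrite inE x_in orbT.
have y_in : y \in vars psi by apply: (subformula_vars sub); rewrite mem_head.
split=> [new_dep|old_dep].
- apply: NNPP => /dep_counterexample /(child_refutes sub) [c [agree_c new_y]].
  have : new_asg u y = new_asg (c :: u) y.
    by apply: new_dep; [exists (c :: u)|exact: new_agree_child].
  rewrite new_asgE // origin_new; last by move=> eq_y; apply: new_y.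
  by move=> eq_origin; have := size_suffix (origin_suffix u y); rewrite eq_origin /=; lia.
- move=> t [g ->] agree_g; apply/new_asgE => //; apply: dep_origin old_dep _.
  by move=> x x_in; apply/esym/new_asgE; [exact: X_sub|exact: agree_g].
Qed.

Lemma faithful_subformulas f : In f (subformulas psi) -> faithful f.
Proof.
elim: f => [P xs|g IH|g IHg h IHh|X g IH|X y] sub.
- exact: faithful_atom.
- have faithful_g : faithful g.
    by apply: IH; apply: subformulas_trans sub; right; apply: subformulas_refl.
  by move=> u /=; rewrite faithful_g.
- have faithful_g : faithful g.
    apply: IHg; apply: subformulas_trans sub.
    by right; apply: in_or_app; left; apply: subformulas_refl.
  have faithful_h : faithful h.
    apply: IHh; apply: subformulas_trans sub.
    by right; apply: in_or_app; right; apply: subformulas_refl.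
  by move=> u /=; rewrite faithful_g faithful_h.
- have faithful_g : faithful g.
    by apply: IH; apply: subformulas_trans sub; right; apply: subformulas_refl.
  exact: faithful_box sub faithful_g.
- exact: faithful_dep.
Qed.

Definition bag (u : node) (p : point) : Prop := exists2 x, x \in vars psi & p = new_asg u x.

Lemma bag_size u : size_le (bag u) (size (undup (vars psi))).
Proof.
exists (map (new_asg u) (undup (vars psi))); split; first by rewrite -[length _]/(size _) size_map.
by move=> _ [x x_in ->]; apply/InP; rewrite map_f // mem_undup.
Qed.

(** A live tuple is the renaming of an atom at some node, hence lies in the
    bag of that node. *)
Lemma bag_live r (a : r.-tuple point) : live (preds psi) new_interp a ->
  exists u, forall p, In p (tval a) -> bag u p.
Proof.
move=> [P [eP [_ [_ [u [xs [eq_a [xs_sub _]]]]]]]]; subst r.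
exists u => p /InP; rewrite /= in eq_a; rewrite eq_a => /mapP [x x_in ->].
by exists x => //; apply: xs_sub.
Qed.

Lemma bag_to_origin x u : x \in vars psi ->
  clos_refl_trans _ (fun a b => word_edge a b /\ bag a (new_asg u x) /\ bag b (new_asg u x))
    u (origin u x).
Proof.
move=> x_in; elim: u => [|c u IH]; first exact: rt_refl.
have [same|new] := classic (asg (c :: u) x = asg u x); last by rewrite origin_new //; apply: rt_refl.
have same_point : new_asg (c :: u) x = new_asg u x by apply/new_asgE; rewrite // origin_same.
rewrite origin_same // same_point; apply: rt_trans IH; apply: rt_step.
split; first by right; exists c.
by split; exists x.
Qed.

(** The nodes whose bag contains a given name are connected: they all reach
    the common origin of that name. *)
Lemma bag_connected p : connected_set (@word_edge letter) (fun u => bag u p).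
Proof.
move=> u v [x x_in ->] [x' x'_in eq_p].
have [eq_origin eq_x] : origin u x = origin v x' /\ x = x'.
  by move: eq_p; rewrite /new_asg x_in x'_in => -[].
subst x'; apply: rt_trans (bag_to_origin u x_in) _.
rewrite eq_origin eq_p; apply: clos_rt_sym (bag_to_origin v x_in).
by move=> a b [e_ab [bag_a bag_b]]; split; first exact: word_edge_sym.
Qed.

Lemma new_model_ktree : ktree_fb (preds psi) new_interp (size (undup (vars psi))).
Proof.
exists node, (@word_edge letter), bag.
split; first exact: word_tree.
split; first exact: word_tree_finitely_branching.
split; first exact: bag_size.
split; first exact: bag_live.
exact: bag_connected.
Qed.

Lemma new_interp_vocabulary P (a : (ar P).-tuple point) :
  P \notin preds psi -> ~ new_interp a.
Proof. by move=> P_out [P_in _]; rewrite P_in in P_out. Qed.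

Lemma new_team_vocabulary s t : new_team s -> new_team t ->
  forall x, x \notin vars psi -> s x = t x.
Proof. by move=> [u ->] [g ->] x x_out; rewrite /new_asg (negbTE x_out). Qed.

Lemma new_model_sat : sat I A s0 psi -> sat new_interp new_team (new_asg [::]) psi.
Proof. exact: (faithful_subformulas (subformulas_refl psi) [::]).2. Qed.
End Unravelling.

Theorem corollary2p1 (V : eqType) (Pred : eqType) (ar : Pred -> nat)
  (psi : @lfd V Pred ar) (k : nat) :
  satisfiable psi ->
  size (undup (vars psi)) = k ->
  exists (O : Type) (I : interp ar O) (A : (V -> O) -> Prop),
    (* M is a tau_psi-structure: predicates outside tau_psi are empty *)
    (forall P, P \notin preds psi -> forall a, ~ I P a) /\
    (* A is a set of assignments on V_psi: values outside V_psi are immaterial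
       (all assignments coincide there) *)
    (forall s t, A s -> A t -> forall x, x \notin vars psi -> s x = t x) /\
    ktree_fb (preds psi) I k /\
    exists s, A s /\ sat I A s psi.
Proof.
move=> [O [I [A [s0 [A_s0 sat_psi]]]]] <-.
exists (point psi), (new_interp (psi := psi) I A s0), (new_team I A s0).
split; first by move=> P /new_interp_vocabulary.
split; first exact: new_team_vocabulary.
split; first exact: new_model_ktree.
exists (new_asg I A s0 [::]); split; first by exists [::].
exact: new_model_sat.
Qed.
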